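(* In every playable coalition model $\mathcal{M}$, for every state $w$, coalition $C\subseteq N$ and $\varphi\in\mathcal{L}_{CL}$: if $\mathcal{M},w\models\mathrm{FC}_C(\varphi)$ then $\mathcal{M},w\models\mathrm{FI}_{N\setminus C}(\varphi)$.
   Context: Let $N=\{1,\dots,n\}$ be a finite set of agents and $\mathrm{Prop}$ a countable set of atoms. The language $\mathcal{L}_{CL}$ is $\varphi ::= p \mid \neg\varphi \mid (\varphi\wedge\psi)\mid [C]\varphi$ ($p\in\mathrm{Prop}$, $C\subseteq N$). A coalition model is $\mathcal{M}=(W,E,V)$, $W$ nonempty, $E_w(C)\subseteq\mathcal{P}(W)$ for $w\in W$, $C\subseteq N$, $V:\mathrm{Prop}\to\mathcal{P}(W)$; satisfaction is classical for Boolean parts and $\mathcal{M},w\models[C]\varphi$ iff $[\![\varphi]\!]_{\mathcal{M}}=\{u\mid\mathcal{M},u\models\varphi\}\in E_w(C)$. Write $\overline{X}=W\setminus X$. $E_w$ is playable if for all $C,D\subseteq N$, $X,Y\subseteq W$: (i) $\emptyset\notin E_w(C)$; (ii) $W\in E_w(C)$; (iii) if $X\in E_w(C)$ and $X\subseteq Y$ then $Y\in E_w(C)$; (iv) if $C\cap D=\emptyset$, $X\in E_w(C)$, $Y\in E_w(D)$ then $X\cap Y\in E_w(C\cup D)$; (v) $X\notin E_w(\emptyset)$ iff $\overline{X}\in E_w(N)$. The model is playable if every $E_w$ is. Define $\mathrm{FC}_C(\varphi)=[C]\varphi\wedge[C]\neg\varphi$ and $\mathrm{FI}_C(\varphi)=\neg[C]\varphi\wedge\neg[C]\neg\varphi$.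 *)

From mathcomp Require Import all_boot.
Set Implicit Arguments. Unset Strict Implicit. Unset Printing Implicit Defensive.

(* Agents N = {1..n} represented by 'I_n; coalitions are {set 'I_n}.
   Subsets of the state space W are predicates W -> Prop. *)

Inductive form (n : nat) : Type :=
  | Atom : nat -> form n
  | Neg : form n -> form n
  | And : form n -> form n -> form n
  | Box : {set 'I_n} -> form n -> form n.

Record coalition_model (n : nat) := CModel {
  cm_W : Type;
  cm_inhabited : inhabited cm_W;
  cm_E : cm_W -> {set 'I_n} -> (cm_W -> Prop) -> Prop;
  cm_V : nat -> cm_W -> Prop
}.

Arguments cm_W {n} _.
Arguments cm_inhabited {n} _.
Arguments cm_E {n} _ _ _ _.
Arguments cm_V {n} _ _ _.

Fixpoint sat (n : nat) (M : coalition_model n) (w : cm_W M) (f : form n) : Prop :=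
  match f with
  | Atom p => cm_V M p w
  | Neg g => ~ @sat n M w g
  | And g h => @sat n M w g /\ @sat n M w h
  | Box C g => cm_E M w C (fun u => @sat n M u g)
  end.

Arguments sat {n} M w f.

Definition playable_at (n : nat) (M : coalition_model n) (w : cm_W M) : Prop :=
  (forall C : {set 'I_n}, ~ cm_E M w C (fun _ => False)) /\
  (forall C : {set 'I_n}, cm_E M w C (fun _ => True)) /\
  (forall (C : {set 'I_n}) (X Y : cm_W M -> Prop),
      cm_E M w C X -> (forall u, X u -> Y u) -> cm_E M w C Y) /\
  (forall (C D : {set 'I_n}) (X Y : cm_W M -> Prop),
      [disjoint C & D] -> cm_E M w C X -> cm_E M w D Y ->
      cm_E M w (C :|: D) (fun u => X u /\ Y u)) /\
  (forall X : cm_W M -> Prop,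
      ~ cm_E M w set0 X <-> cm_E M w setT (fun u => ~ X u)).

Arguments playable_at {n} M w.

Definition playable (n : nat) (M : coalition_model n) : Prop :=
  forall w : cm_W M, playable_at M w.

Arguments playable {n} M.

Definition FC (n : nat) (C : {set 'I_n}) (f : form n) : form n :=
  And (Box C f) (Box C (Neg f)).

Definition FI (n : nat) (C : {set 'I_n}) (f : form n) : form n :=
  And (Neg (Box C f)) (Neg (Box C (Neg f))).

From mathcomp Require Import all_boot.

(* Disjoint coalitions cannot force disjoint outcomes: by superadditivity they
   would jointly force the empty set. Since C forces both phi and its negation,
   ~: C can force neither. *)

Lemma playable_at_disjoint_consistent (n : nat) (M : coalition_model n)
    (w : cm_W M) (C D : {set 'I_n}) (X Y : cm_W M -> Prop) :
  playable_at M w -> [disjoint C & D] ->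
  cm_E M w C X -> cm_E M w D Y -> ~ (forall u, X u -> Y u -> False).
Proof.
move=> [E_nonempty [_ [E_monotone [E_superadditive _]]]] CD EX EY XY.
have EXY := E_superadditive _ _ _ _ CD EX EY.
apply: (E_nonempty (C :|: D)); apply: (E_monotone _ _ _ EXY) => u [].
exact: XY.
Qed.

Lemma sat_Box_disjoint_Neg (n : nat) (M : coalition_model n) (w : cm_W M)
    (C D : {set 'I_n}) (f : form n) :
  playable_at M w -> [disjoint C & D] ->
  sat M w (Box C f) -> ~ sat M w (Box D (Neg f)).
Proof.
move=> Pw CD Cf Dnf; apply: playable_at_disjoint_consistent Pw CD Cf Dnf _.
by move=> u fu /(_ fu).
Qed.

Theorem mainTheorem3 (n : nat) (M : coalition_model n) :
  playable M ->
  forall (w : cm_W M) (C : {set 'I_n}) (f : form n),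
    sat M w (FC C f) -> sat M w (FI (~: C) f).
Proof.
move=> P w C f [Cf Cnf].
have CCc : [disjoint C & ~: C] by rewrite disjoints_subset setCK.
split=> [Ccf | Ccnf].
- by apply: sat_Box_disjoint_Neg (P w) _ Ccf Cnf; rewrite disjoint_sym.
- exact: sat_Box_disjoint_Neg (P w) CCc Cf Ccnf.
Qed.
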